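(* Let $X=[a,b]\subseteq\mathbb{R}$ with $a<b$ and let $\mathcal{U}$ be the set of all continuous preferences on $[a,b]$ with a unique top. (i) A median voter scheme $f^\alpha:\mathcal{U}^n\to[a,b]$ with fixed ballots $\alpha_1\le\dots\le\alpha_{n-1}$ in $[a,b]$ is NOM if and only if $\alpha_1=a$ and $\alpha_{n-1}=b$. (ii) A non-dictatorial generalized median voter scheme $f^p:\mathcal{U}^n\to[a,b]$ is NOM if and only if $p_{N\setminus\{i\}}=a$ and $p_{\{i\}}=b$ for each $i\in N$.
   Context: $N=\{1,\dots,n\}$, $n\ge2$. A preference in $\mathcal{U}$ is a continuous complete and transitive binary relation $R_i$ on $[a,b]$ (indifferences between non-top alternatives allowed) with a unique best element $t(R_i)$; $P_i$ denotes its strict part. Median voter scheme: $f^\alpha(R)=\mathrm{med}\{t(R_1),\dots,t(R_n),\alpha_1,\dots,\alpha_{n-1}\}$. A monotonic family of fixed ballots is $p=\{p_S\}_{S\subseteq N}$ with $p_S\in[a,b]$, $p_N=a$, $p_\emptyset=b$, and $p_Q\le p_T$ whenever $T\subseteq Q$; the generalized median voter scheme is $f^p(R)=\min_{S\subseteq N}\max_{j\in S}\{t(R_j),p_S\}$. A rule is dictatorial if there is $i$ with $f(R)=t(R_i)$ for all $R$. Option set $O(R_i)=\{f(R_i,R_{-i}):R_{-i}\in\mathcal{U}^{n-1}\}$ (for these rules a closed interval). For a nonempty compact $Y$, let $B(R_i,Y)$ and $W(R_i,Y)$ denote an $R_i$-best and an $R_i$-worst element of $Y$. $R_i'$ is a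 manipulation at $R_i$ if $f(R_i',R_{-i})\,P_i\,f(R_i,R_{-i})$ for some $R_{-i}$; it is obvious if $W(R_i,O(R_i'))\,P_i\,W(R_i,O(R_i))$ or $B(R_i,O(R_i'))\,P_i\,B(R_i,O(R_i))$. The rule is NOM if it admits no obvious manipulation. *)

From HB Require Import structures.
From mathcomp Require Import all_boot all_order all_algebra.
From mathcomp Require Import all_classical all_reals topology normedtype.
Set Implicit Arguments. Unset Strict Implicit. Unset Printing Implicit Defensive.
Import Order.TTheory GRing.Theory Num.Theory.
Import numFieldNormedType.Exports.
Local Open Scope classical_set_scope.
Local Open Scope ring_scope.

Section Voting.
Variable R : realType.
Variables a b : R.

Definition inX (x : R) : Prop := a <= x <= b.

(* a (weak) preference relation on [a,b]: Ri x y means "x is at least as good as y" *)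
Definition relation := R -> R -> Prop.

Definition strict (Ri : relation) (x y : R) : Prop := Ri x y /\ ~ Ri y x.

Definition is_best (Ri : relation) (t : R) : Prop :=
  inX t /\ forall y, inX y -> Ri t y.

Definition in_U (Ri : relation) : Prop :=
  (forall x y, inX x -> inX y -> Ri x y \/ Ri y x) /\
  (forall x y z, inX x -> inX y -> inX z -> Ri x y -> Ri y z -> Ri x z) /\
  (forall x, inX x ->
     closed [set y | inX y /\ Ri y x] /\ closed [set y | inX y /\ Ri x y]) /\
  (exists t, is_best Ri t /\ forall t', is_best Ri t' -> t' = t).

Definition top (Ri : relation) : R := xget a [set t | is_best Ri t].

Variable n : nat.
Definition profile := 'I_n -> relation.
Definition in_Un (P : profile) : Prop := forall i, in_U (P i).
Definition rule := profile -> R.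

Definition upd (P : profile) (i : 'I_n) (Ri : relation) : profile :=
  fun j => if j == i then Ri else P j.

Definition option_set (f : rule) (i : 'I_n) (Ri : relation) : set R :=
  [set x | exists P : profile, in_Un P /\ x = f (upd P i Ri)].

Definition is_worst (Ri : relation) (Y : set R) (w : R) : Prop :=
  Y w /\ forall y, Y y -> Ri y w.
Definition is_bestin (Ri : relation) (Y : set R) (w : R) : Prop :=
  Y w /\ forall y, Y y -> Ri w y.

Definition manipulation (f : rule) (i : 'I_n) (Ri Ri' : relation) : Prop :=
  exists P : profile, in_Un P /\ strict Ri (f (upd P i Ri')) (f (upd P i Ri)).

Definition obvious (f : rule) (i : 'I_n) (Ri Ri' : relation) : Prop :=
  (exists w' w, is_worst Ri (option_set f i Ri') w' /\
                is_worst Ri (option_set f i Ri) w /\ strict Ri w' w) \/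
  (exists w' w, is_bestin Ri (option_set f i Ri') w' /\
                is_bestin Ri (option_set f i Ri) w /\ strict Ri w' w).

Definition obvious_manipulation (f : rule) (i : 'I_n) (Ri Ri' : relation) :=
  manipulation f i Ri Ri' /\ obvious f i Ri Ri'.

Definition NOM (f : rule) : Prop :=
  forall i Ri Ri', in_U Ri -> in_U Ri' -> ~ obvious_manipulation f i Ri Ri'.

Definition dictatorial (f : rule) : Prop :=
  exists i : 'I_n, forall P : profile, in_Un P -> f P = top (P i).

Definition med (s : seq R) : R := nth 0 (sort <=%R s) (size s)./2.

Definition median_voter_scheme (alpha : nat -> R) : rule :=
  fun P => med ([seq top (P i) | i <- enum 'I_n] ++
                [seq alpha k | k <- iota 1 n.-1]).

Definition monotonic_family (p : {set 'I_n} -> R) : Prop :=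
  (forall S, inX (p S)) /\ p (finset.setTfor 'I_n) = a /\ p (finset.set0 : {set 'I_n}) = b /\
  (forall Q T : {set 'I_n}, T \subset Q -> p Q <= p T).

(* f^p(R) = min_{S ⊆ N} max_{j ∈ S} {t(R_j), p_S}; the seed b of the outer min
   is harmless since the S = ∅ term equals p_∅ = b. *)
Definition gen_median_voter_scheme (p : {set 'I_n} -> R) : rule :=
  fun P => \big[Num.min/b]_(S : {set 'I_n})
             \big[Num.max/p S]_(j in S) top (P j).

End Voting.

(* For both kinds of rules, agent i's option set when she reports top t is the interval
   between min(l_i, t) and max(h_i, t), with (l_i, h_i) = (alpha_1, alpha_(n-1)) for median
   voter schemes and (p_(N\i), p_{i}) for generalized ones.  If l_i = a and h_i = b, every
   option set is all of [a, b], so no report changes the best or worst option.  If instead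
   m := min(l_i, h_i) > a, take an agent with top a whose loss increases up to (a + m)/2 and
   drops to a constant from m on: truthfully, (a + m)/2 is among her options, while reporting
   top m confines the outcome to [m, b], all of which she prefers to it, so her worst option
   strictly improves.  Symmetrically max(l_i, h_i) = b, hence (l_i, h_i) is (a, b) or (b, a);
   the latter makes i a dictator, and for median voter schemes contradicts
   alpha_1 <= alpha_(n-1). *)

From HB Require Import structures.
From mathcomp Require Import all_boot all_order all_algebra.
From mathcomp Require Import all_classical all_reals topology normedtype.
From mathcomp Require Import lra zify.
Import Order.TTheory GRing.Theory Num.Theory.
Import numFieldNormedType.Exports.
Set Implicit Arguments. Unset Strict Implicit. Unset Printing Implicit Defensive.
Local Open Scope ring_scope.

Section Preferences.
Variables (R : realType) (a b : R).
Local Open Scope classical_set_scope.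

Lemma top_in Ri : in_U a b Ri -> inX a b (top a b Ri).
Proof.
case=> _ [_ [_ [t [best_t _]]]].
by have [] : is_best a b Ri (top a b Ri) by apply: xgetPex; exists t.
Qed.

Lemma upd_in n (P : profile R n) i Q : in_Un a b P -> in_U a b Q -> in_Un a b (upd P i Q).
Proof. by move=> UP UQ j; rewrite /upd; case: (j == i). Qed.

Definition pref_of_loss (d : R -> R) : relation R := fun x y => d x <= d y.

Lemma pref_of_loss_strict d x y : d x < d y -> strict (pref_of_loss d) x y.
Proof. by move=> dxy; split; [exact: ltW | rewrite /pref_of_loss leNgt dxy]. Qed.

Lemma closed_inX_preimage (d : R -> R) (C : set R) :
  continuous d -> closed C -> closed [set y | inX a b y /\ C (d y)].
Proof.
move=> cd cC.
have -> : [set y | inX a b y /\ C (d y)] =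
          [set y | a <= y] `&` [set y | y <= b] `&` d @^-1` C.
  apply/seteqP; split => y /=; first by case=> /andP[ay yb] Cy.
  by case=> -[ay yb] Cy; rewrite /inX ay yb.
apply: closedI; first by apply: closedI; [exact: closed_ge | exact: closed_le].
by apply: preimage_closed cC => y _; apply: cd.
Qed.

Lemma pref_of_loss_in_U (d : R -> R) t : continuous d -> inX a b t ->
    (forall y, inX a b y -> y <> t -> d t < d y) ->
  in_U a b (pref_of_loss d) /\ top a b (pref_of_loss d) = t.
Proof.
move=> cd Xt dt.
have best_t : is_best a b (pref_of_loss d) t.
  split=> // y Xy; have [->|/eqP yt] := eqVneq y t; first exact: lexx.
  exact/ltW/dt.
have uniq_t t' : is_best a b (pref_of_loss d) t' -> t' = t.
  move=> [Xt' best_t']; have [//|/eqP t't] := eqVneq t' t.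
  by have := lt_le_trans (dt _ Xt' t't) (best_t' t Xt); rewrite ltxx.
split; last exact: xget_unique.
split; first by move=> x y _ _; case/orP: (le_total (d x) (d y)); [left | right].
split; first by move=> x y z _ _ _; exact: le_trans.
split; last by exists t.
move=> x _; split.
  exact: (closed_inX_preimage cd (@closed_le _ (d x))).
exact: (closed_inX_preimage cd (@closed_ge _ (d x))).
Qed.

Lemma continuous_dist_to (x0 : R) : continuous (fun y : R => `|y - x0|).
Proof. by move=> x; apply: cvg_norm; apply: cvgB cvg_id (cvg_cst _). Qed.

Definition dist_pref (x0 : R) : relation R := pref_of_loss (fun y => `|y - x0|).

Lemma dist_pref_in_U x0 :
  inX a b x0 -> in_U a b (dist_pref x0) /\ top a b (dist_pref x0) = x0.
Proof.
move=> X0; apply: pref_of_loss_in_U => //.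
  exact: continuous_dist_to.
by move=> y _ /eqP yx0; rewrite subrr normr0 normr_gt0 subr_eq0.
Qed.

Definition hump (e r y : R) : R :=
  Num.min `|y - e| (Num.max (r / 4) (r - `|y - e|)).

Lemma hump_pref_in_U e r : 0 < r -> inX a b e ->
  in_U a b (pref_of_loss (hump e r)) /\ top a b (pref_of_loss (hump e r)) = e.
Proof.
move=> r_gt0 Xe; apply: pref_of_loss_in_U => //.
  apply: min_fun_continuous; last apply: max_fun_continuous.
  - exact: continuous_dist_to.
  - by move=> y; exact: cvg_cst.
  - by move=> y; apply: cvgB; [exact: cvg_cst | exact: continuous_dist_to].
move=> y _ /eqP ye; have r4_gt0 : 0 < r / 4 by lra.
rewrite /hump subrr normr0 subr0 min_l ?le_max ?(ltW r4_gt0) //.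
by rewrite lt_min normr_gt0 subr_eq0 ye lt_max r4_gt0.
Qed.

Lemma hump_far e r y : 0 <= r -> r <= `|y - e| -> hump e r y = r / 4.
Proof. by move=> r_ge0 ry; rewrite /hump max_l ?min_r //; lra. Qed.

Lemma hump_half e r y : 0 <= r -> `|y - e| = r / 2 -> hump e r y = r / 2.
Proof.
move=> r_ge0 ry; rewrite /hump ry (_ : r - r / 2 = r / 2); last by lra.
by rewrite max_r ?minxx //; lra.
Qed.

Lemma hump_le e r y : 0 <= r -> hump e r y <= r / 2.
Proof.
move=> r_ge0; rewrite /hump ge_min ge_max.
by have [|] := leP `|y - e| (r / 2) => ?; apply/orP; [left | right; apply/andP; split]; lra.
Qed.

End Preferences.

Section ObviousManipulationOfLoss.
Variables (R : realType) (a b : R) (n : nat) (f : rule R n).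

Lemma obvious_manipulation_of_worst i d Ri' P w w' :
    in_Un a b P -> f (upd P i (pref_of_loss d)) = w ->
    is_worst (pref_of_loss d) (option_set a b f i (pref_of_loss d)) w ->
    is_worst (pref_of_loss d) (option_set a b f i Ri') w' -> d w' < d w ->
  obvious_manipulation a b f i (pref_of_loss d) Ri'.
Proof.
move=> UP fPw worst_w worst_w' w'w; split; last first.
  by left; exists w', w; split; [|split]; last exact: pref_of_loss_strict.
exists P; split=> //; rewrite fPw; apply: pref_of_loss_strict.
by apply: le_lt_trans w'w; apply: worst_w'.2; exists P.
Qed.

End ObviousManipulationOfLoss.

Section TopsOnlyRule.
Variables (R : realType) (a b : R) (n : nat).
Local Open Scope classical_set_scope.
Hypothesis ab : a < b.
Variable F : ('I_n -> R) -> R.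

(* The bounds on [F] making agent [i]'s option set, when she reports top [t], the interval
   between [Num.min (lo i) t] and [Num.max (hi i) t]. *)
Record option_ends (lo hi : 'I_n -> R) : Prop := OptionEnds {
  ends_in : forall i, inX a b (lo i) /\ inX a b (hi i);
  le_F_others : forall i x t, x <= hi i -> (forall j, j != i -> x <= t j) -> x <= F t;
  le_F_all : forall x t, x <= b -> (forall j, x <= t j) -> x <= F t;
  le_F_agent : forall i x t, x <= lo i -> x <= t i -> x <= F t;
  F_le_all : forall x t, a <= x -> (forall j, t j <= x) -> F t <= x;
  F_le_others : forall i x t, lo i <= x -> (forall j, j != i -> t j <= x) -> F t <= x;
  F_le_agent : forall i x t, hi i <= x -> t i <= x -> F t <= x }.

Variables lo hi : 'I_n -> R.
Hypothesis ends : option_ends lo hi.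

Definition tops_rule : rule R n := fun P => F (fun j => top a b (P j)).

Lemma tops_rule_in P : in_Un a b P -> inX a b (tops_rule P).
Proof.
move=> UP; have Xt j := top_in (UP j).
apply/andP; split.
  by apply: (le_F_all ends) => [|j]; [exact: ltW | case/andP: (Xt j)].
by apply: (F_le_all ends) => [|j]; [exact: ltW | case/andP: (Xt j)].
Qed.

Definition const_profile (x : R) : profile R n := fun _ => dist_pref x.

Lemma const_profile_in x : inX a b x -> in_Un a b (const_profile x).
Proof. by move=> Xx j; case: (dist_pref_in_U Xx). Qed.

Lemma top_upd_const x i Q j : inX a b x ->
  top a b (upd (const_profile x) i Q j) = if j == i then top a b Q else x.
Proof. by move=> Xx; rewrite /upd; case: (j == i) => //; case: (dist_pref_in_U Xx). Qed.

Lemma tops_rule_const x i :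
  inX a b x -> tops_rule (upd (const_profile x) i (dist_pref x)) = x.
Proof.
move=> Xx; have [ax xb] := andP Xx; have [_ top_x] := dist_pref_in_U Xx.
have tops_x j : top a b (upd (const_profile x) i (dist_pref x) j) = x.
  by rewrite top_upd_const // top_x; case: (j == i).
apply/le_anti/andP; split; [apply: (F_le_all ends) | apply: (le_F_all ends)] => //.
all: by move=> j; rewrite tops_x.
Qed.

Lemma option_set_full i Q : lo i = a -> hi i = b -> in_U a b Q ->
  option_set a b tops_rule i Q = [set y | inX a b y].
Proof.
move=> lo_a hi_b UQ; apply/seteqP; split=> y /=.
  by move=> [P [UP ->]]; exact: tops_rule_in (upd_in i UP UQ).
move=> Xy; have [ay yb] := andP Xy.
exists (const_profile y); split; first exact: const_profile_in.
apply/le_anti/andP; split; rewrite /tops_rule.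
- by apply: (le_F_others ends (i := i)) => [|j ji]; rewrite ?hi_b ?top_upd_const ?(negbTE ji).
- by apply: (F_le_others ends (i := i)) => [|j ji]; rewrite ?lo_a ?top_upd_const ?(negbTE ji).
Qed.

Lemma NOM_of_extreme_ends : (forall i, lo i = a /\ hi i = b) -> NOM a b tops_rule.
Proof.
move=> extreme i Ri Ri' URi URi' [_ obv]; have [lo_a hi_b] := extreme i.
rewrite /obvious (option_set_full lo_a hi_b URi) (option_set_full lo_a hi_b URi') in obv.
by case: obv => [] [w' [w [[Xw' worst_w'] [[Xw worst_w] [_]]]]]; apply;
  [apply: worst_w' | apply: worst_w].
Qed.

Lemma hump_obvious_manipulation i e r c m :
    0 < r -> inX a b c -> inX a b m -> `|c - e| = r / 2 ->
    (forall y, option_set a b tops_rule i (dist_pref m) y -> r <= `|y - e|) ->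
    tops_rule (upd (const_profile c) i (pref_of_loss (hump e r))) = c ->
  obvious_manipulation a b tops_rule i (pref_of_loss (hump e r)) (dist_pref m).
Proof.
move=> r_gt0 Xc Xm ce far_m fc; have r_ge0 := ltW r_gt0.
have Om : option_set a b tops_rule i (dist_pref m) m.
  by exists (const_profile m); split; [exact: const_profile_in | rewrite tops_rule_const].
apply: (obvious_manipulation_of_worst (P := const_profile c) (w := c) (w' := m)) => //.
- exact: const_profile_in.
- split; first by exists (const_profile c); split; [exact: const_profile_in | rewrite fc].
  by move=> y _; rewrite /pref_of_loss (hump_half r_ge0 ce); exact: hump_le.
- split=> // y /far_m far_y.
  by rewrite /pref_of_loss (hump_far r_ge0 far_y) (hump_far r_ge0 (far_m _ Om)).
- by rewrite (hump_far r_ge0 (far_m _ Om)) (hump_half r_ge0 ce); lra.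
Qed.

Lemma NOM_lo_or_hi_eq_a i : NOM a b tops_rule -> lo i = a \/ hi i = a.
Proof.
move=> nom; have [/andP[alo lob] /andP[ahi hib]] := ends_in ends i.
have [a_lt|] := ltP a (Num.min (lo i) (hi i)); last first.
  by rewrite ge_min => /orP[] ?; [left | right]; apply/le_anti/andP.
set m := Num.min (lo i) (hi i) in a_lt.
have [m_lo m_hi] : m <= lo i /\ m <= hi i by apply/andP; rewrite -le_min.
set c := (a + m) / 2.
have Xa : inX a b a by rewrite /inX lexx ltW.
have Xm : inX a b m by apply/andP; split; lra.
have Xc : inX a b c by apply/andP; split; rewrite /c; lra.
have r_gt0 : 0 < m - a by rewrite subr_gt0.
have [U_hump top_hump] := hump_pref_in_U (b := b) r_gt0 Xa.
have [U_m top_m] := dist_pref_in_U Xm.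
exfalso; apply: (nom i _ _ U_hump U_m); apply: (hump_obvious_manipulation (c := c)) => //.
- by rewrite ger0_norm /c; lra.
- move=> y [P [_ ->]].
  have : m <= tops_rule (upd P i (dist_pref m)).
    by apply: (le_F_agent ends (i := i)) m_lo _; rewrite /upd eqxx top_m.
  by move=> m_le; rewrite ger0_norm; lra.
apply/le_anti/andP; split; rewrite /tops_rule.
- apply: (F_le_all ends) => [|j]; first by rewrite /c; lra.
  by rewrite top_upd_const // top_hump; case: (j == i); rewrite /c; lra.
- apply: (le_F_others ends (i := i)) => [|j ji]; first by rewrite /c; lra.
  by rewrite top_upd_const // (negbTE ji).
Qed.

Lemma NOM_lo_or_hi_eq_b i : NOM a b tops_rule -> lo i = b \/ hi i = b.
Proof.
move=> nom; have [/andP[alo lob] /andP[ahi hib]] := ends_in ends i.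
have [lt_b|] := ltP (Num.max (lo i) (hi i)) b; last first.
  by rewrite le_max => /orP[] ?; [left | right]; apply/le_anti/andP.
set m := Num.max (lo i) (hi i) in lt_b.
have [lo_m hi_m] : lo i <= m /\ hi i <= m by apply/andP; rewrite -ge_max.
set c := (m + b) / 2.
have Xb : inX a b b by rewrite /inX lexx ltW.
have Xm : inX a b m by apply/andP; split; lra.
have Xc : inX a b c by apply/andP; split; rewrite /c; lra.
have r_gt0 : 0 < b - m by rewrite subr_gt0.
have [U_hump top_hump] := hump_pref_in_U (a := a) r_gt0 Xb.
have [U_m top_m] := dist_pref_in_U Xm.
exfalso; apply: (nom i _ _ U_hump U_m); apply: (hump_obvious_manipulation (c := c)) => //.
- by rewrite distrC ger0_norm /c; lra.
- move=> y [P [_ ->]].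
  have : tops_rule (upd P i (dist_pref m)) <= m.
    by apply: (F_le_agent ends (i := i)) hi_m _; rewrite /upd eqxx top_m.
  by move=> le_m; rewrite distrC ger0_norm; lra.
apply/le_anti/andP; split; rewrite /tops_rule.
- apply: (F_le_others ends (i := i)) => [|j ji]; first by rewrite /c; lra.
  by rewrite top_upd_const // (negbTE ji).
- apply: (le_F_all ends) => [|j]; first by rewrite /c; lra.
  by rewrite top_upd_const // top_hump; case: (j == i); rewrite /c; lra.
Qed.

Lemma NOM_ends i : NOM a b tops_rule -> (lo i = a /\ hi i = b) \/ (lo i = b /\ hi i = a).
Proof.
move=> nom; have := NOM_lo_or_hi_eq_a i nom; have := NOM_lo_or_hi_eq_b i nom.
case=> [lo_b|hi_b] [lo_a|hi_a]; [| by right | by left |].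
- by move: ab; rewrite -lo_a lo_b ltxx.
- by move: ab; rewrite -hi_a hi_b ltxx.
Qed.

Lemma dictatorial_of_reversed_ends i : lo i = b -> hi i = a -> dictatorial a b tops_rule.
Proof.
move=> lo_b hi_a; exists i => P UP; have [at_i t_ib] := andP (top_in (UP i)).
apply/le_anti/andP; split.
- by apply: (F_le_agent ends (i := i)); rewrite ?hi_a.
- by apply: (le_F_agent ends (i := i)); rewrite ?lo_b.
Qed.

End TopsOnlyRule.

Lemma sorted_nth_count d (T : orderType d) (x0 : T) (s : seq T) (P : pred T) k :
    sorted <=%O s -> (forall y z, (z <= y)%O -> P y -> P z) -> (k < size s)%N ->
  P (nth x0 s k) = (k < count P s)%N.
Proof.
move=> + P_down; elim: s k => // y s IH k.
rewrite /= (path_sortedE le_trans) => /andP[y_le s_sorted] k_lt.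
have [Py|nPy] := boolP (P y).
  by case: k k_lt => [|k] k_lt //=; rewrite add1n ltnS IH.
have count0 : count P s = 0%N.
  apply/eqP; rewrite -leqn0 leqNgt -has_count; apply/hasPn => z zs.
  exact: contra (P_down _ _ (allP y_le z zs)) nPy.
rewrite count0 /= ltn0; case: k k_lt => [|k]; rewrite ?ltnS => k_lt //=; apply/negbTE => //.
by apply: contra (P_down _ _ (allP y_le _ (mem_nth x0 k_lt))) nPy.
Qed.

Section Median.
Variable R : realType.
Implicit Types (s : seq R) (x : R).

Lemma med_le s x : ((size s)./2 < count (<= x)%R s)%N -> med s <= x.
Proof.
move=> half_lt; have half_size := leq_trans half_lt (count_size _ _).
rewrite /med; change ((<= x)%R (nth 0 (sort <=%R s) (size s)./2)).
by rewrite sorted_nth_count ?count_sort ?size_sort // => y z; exact: le_trans.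
Qed.

Lemma le_med s x : (0 < size s)%N ->
  (size s <= (size s)./2 + count (>= x)%R s)%N -> x <= med s.
Proof.
move=> s_gt0 size_le; rewrite leNgt; apply/negP => med_lt.
have half_size : ((size s)./2 < size s)%N by rewrite -divn2 ltn_Pdiv.
have half_lt : ((size s)./2 < count (< x)%R s)%N.
  rewrite -(count_sort <=%R) -(@sorted_nth_count _ _ 0 _ (< x)%R) ?size_sort //.
  by move=> y z; exact: le_lt_trans.
have count_split : (count (< x)%R s + count (>= x)%R s = size s)%N.
  by rewrite -(count_predC (< x)%R s); congr addn; apply: eq_count => y; rewrite /= leNgt.
lia.
Qed.

End Median.

Section MedianVoterScheme.
Variables (R : realType) (a b : R) (n : nat) (alpha : nat -> R).
Hypothesis n_ge2 : (2 <= n)%N.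
Hypothesis alpha_in : forall k, (1 <= k <= n.-1)%N -> inX a b (alpha k).
Hypothesis alpha_mono :
  forall k l, (1 <= k)%N -> (k <= l)%N -> (l <= n.-1)%N -> alpha k <= alpha l.
Implicit Types (t : 'I_n -> R) (P : pred R).

Definition ballots t := [seq t i | i <- enum 'I_n] ++ [seq alpha k | k <- iota 1 n.-1].

Definition median_tops t := med (ballots t).

Lemma size_ballots t : size (ballots t) = (n + n.-1)%N.
Proof. by rewrite size_cat !size_map size_iota -enumT size_enum_ord. Qed.

Lemma half_size_ballots t : ((size (ballots t))./2 = n.-1)%N.
Proof. by rewrite size_ballots; case: n n_ge2 => // m _; rewrite addSn addnn /= uphalf_double. Qed.

Lemma median_tops_le t x : (n <= count (<= x)%R (ballots t))%N -> median_tops t <= x.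
Proof. by move=> n_le; apply: med_le; rewrite half_size_ballots; lia. Qed.

Lemma le_median_tops t x : (n <= count (>= x)%R (ballots t))%N -> x <= median_tops t.
Proof.
by move=> n_le; apply: le_med; rewrite ?half_size_ballots size_ballots; lia.
Qed.

Lemma count_ballots_all P t : (forall j, P (t j)) -> (n <= count P (ballots t))%N.
Proof.
move=> Pt; rewrite count_cat count_map (@eq_count _ _ predT) // count_predT.
by rewrite size_enum_ord leq_addr.
Qed.

Lemma count_ballots_others P t i k : (1 <= k <= n.-1)%N -> P (alpha k) ->
  (forall j, j != i -> P (t j)) -> (n <= count P (ballots t))%N.
Proof.
move=> /andP[k_ge1 k_le] Pak Pt; rewrite count_cat.
have tops_ge : (n.-1 <= count P [seq t j | j <- enum 'I_n])%N.
  have others : count (predC1 i) (enum 'I_n) = n.-1.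
    have := count_predC (pred1 i) (enum 'I_n).
    rewrite size_enum_ord (count_uniq_mem _ (enum_uniq _)) mem_enum => count_split.
    by rewrite -[in RHS]count_split.
  by rewrite count_map -others; apply: sub_count => j /= ji; apply: Pt.
have alpha_ge : (0 < count P [seq alpha k | k <- iota 1 n.-1])%N.
  rewrite -has_count; apply/hasP; exists (alpha k) => //.
  by apply: map_f; rewrite mem_iota k_ge1 /=; lia.
lia.
Qed.

Lemma count_ballots_agent P t i : P (t i) ->
  (forall k, (1 <= k <= n.-1)%N -> P (alpha k)) -> (n <= count P (ballots t))%N.
Proof.
move=> Pti Palpha; rewrite count_cat.
have tops_ge : (0 < count P [seq t j | j <- enum 'I_n])%N.
  by rewrite -has_count; apply/hasP; exists (t i) => //; apply: map_f; rewrite mem_enum.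
have alpha_eq : count P [seq alpha k | k <- iota 1 n.-1] = n.-1.
  rewrite count_map (@eq_in_count _ _ predT) ?count_predT ?size_iota // => k.
  by rewrite mem_iota => /andP[k_ge1 k_lt] /=; apply: Palpha; rewrite k_ge1 /=; lia.
lia.
Qed.

Lemma median_option_ends :
  option_ends a b median_tops (fun _ => alpha 1) (fun _ => alpha n.-1).
Proof.
have k1 : (1 <= 1 <= n.-1)%N by lia.
have kn : (1 <= n.-1 <= n.-1)%N by lia.
split=> [i | i x t x_le t_ge | x t _ t_ge | i x t x_le x_le_ti
        | x t _ t_le | i x t le_x t_le | i x t le_x ti_le].
- by split; apply: alpha_in.
- exact: le_median_tops (count_ballots_others kn x_le t_ge).
- exact: le_median_tops (count_ballots_all t_ge).
- apply/le_median_tops/(count_ballots_agent x_le_ti) => k /andP[k_ge1 k_le].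
  by apply: le_trans x_le _; apply: alpha_mono.
- exact: median_tops_le (count_ballots_all t_le).
- exact: median_tops_le (count_ballots_others k1 le_x t_le).
- apply/median_tops_le/(count_ballots_agent (P := (<= x)%R) ti_le) => k /andP[k_ge1 k_le].
  by apply: le_trans le_x; apply: alpha_mono.
Qed.

End MedianVoterScheme.

Section GeneralizedMedianVoterScheme.
Variables (R : realType) (a b : R) (n : nat) (p : {set 'I_n} -> R).
Hypothesis p_mono : monotonic_family a b p.

Definition gen_median_tops (t : 'I_n -> R) : R :=
  \big[Num.min/b]_(S : {set 'I_n}) \big[Num.max/p S]_(j in S) t j.

Lemma gen_median_tops_le t S x :
  p S <= x -> (forall j, j \in S -> t j <= x) -> gen_median_tops t <= x.
Proof. by move=> pS_le t_le; apply: le_trans (bigmin_le _ S _) (bigmax_le _ pS_le t_le). Qed.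

Lemma le_gen_median_tops t x :
    (forall S, x <= p S \/ exists2 j, j \in S & x <= t j) ->
  x <= gen_median_tops t.
Proof.
move=> x_le; have [_ [_ [p0 _]]] := p_mono.
apply: le_bigmin => [|S _].
  by case: (x_le finset.set0) => [|[j]]; rewrite ?p0 ?inE.
case: (x_le S) => [x_pS | [j jS x_tj]]; first exact: le_trans x_pS (bigmax_ge_id _ _ _ _).
exact: le_trans x_tj (le_bigmax_cond _ _ jS).
Qed.

Lemma gen_median_option_ends :
  option_ends a b gen_median_tops (fun i => p ([set: 'I_n] :\ i)) (fun i => p [set i]).
Proof.
have [p_in [pT [p0 p_anti]]] := p_mono.
split=> [i | i x t x_le t_ge | x t x_le t_ge | i x t x_le x_le_ti
        | x t le_x t_le | i x t le_x t_le | i x t le_x ti_le].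
- by split; apply: p_in.
- apply: le_gen_median_tops => S.
  have [S_sub | /subsetPn[j jS]] := boolP (S \subset [set i]).
    by left; apply: le_trans x_le (p_anti _ _ S_sub).
  by rewrite inE => ji; right; exists j => //; apply: t_ge.
- apply: le_gen_median_tops => S.
  have [-> | /set0Pn[j jS]] := eqVneq S finset.set0; first by left; rewrite p0.
  by right; exists j.
- apply: le_gen_median_tops => S; have [iS | iS] := boolP (i \in S).
    by right; exists i.
  left; apply: le_trans x_le (p_anti _ _ _).
  by apply/fintype.subsetP => j jS; rewrite !inE andbT; apply: contraNneq iS => <-.
- by apply: (gen_median_tops_le (S := [set: 'I_n])) => [|j _]; rewrite ?pT.
- apply: (gen_median_tops_le (S := [set: 'I_n] :\ i)) => // j.
  by rewrite !inE => /andP[ji _]; apply: t_le.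
- by apply: (gen_median_tops_le (S := [set i])) => // j; rewrite inE => /eqP ->.
Qed.

End GeneralizedMedianVoterScheme.

Theorem theorem5 (R : realType) (a b : R) (n : nat) :
  a < b -> (2 <= n)%N ->
  (forall alpha : nat -> R,
      (forall k, (1 <= k <= n.-1)%N -> a <= alpha k <= b) ->
      (forall k l, (1 <= k)%N -> (k <= l)%N -> (l <= n.-1)%N -> alpha k <= alpha l) ->
      (NOM a b (@median_voter_scheme R a b n alpha) <->
         alpha 1%N = a /\ alpha n.-1 = b)) /\
  (forall p : {set 'I_n} -> R,
      monotonic_family a b p ->
      ~ dictatorial a b (gen_median_voter_scheme a b p) ->
      (NOM a b (gen_median_voter_scheme a b p) <->
         forall i : 'I_n, p (finset.setTfor 'I_n :\ i) = a /\ p [set i] = b)).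
Proof.
move=> ab n_ge2; split.
- move=> alpha alpha_in alpha_mono; have i0 : 'I_n := Ordinal (ltnW n_ge2).
  have ends := median_option_ends n_ge2 alpha_in alpha_mono.
  split; last by case=> alpha1 alphan; apply: (NOM_of_extreme_ends ab ends).
  move=> /(NOM_ends ab ends i0) [] // [alpha1 alphan].
  have : alpha 1 <= alpha n.-1 by apply: alpha_mono => //; lia.
  by rewrite alpha1 alphan; lra.
- move=> p p_mono not_dict; have ends := gen_median_option_ends p_mono.
  split; last exact: (NOM_of_extreme_ends ab ends).
  move=> nom i; case: (NOM_ends ab ends i nom) => // [[lo_b hi_a]].
  by case: not_dict; exact: (dictatorial_of_reversed_ends ends lo_b hi_a).
Qed.
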